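(* Assume the following about $\phi^{\mathrm{AI}}(K;0)=h^{\mathrm{AI}}(K;0)/K$: it is continuous on $(0,\infty)$; $\phi^{\mathrm{AI}}(K;0)<\lambda$ for all sufficiently small $K>0$; there is $\hat K>0$ with $\phi^{\mathrm{AI}}(\hat K;0)>\lambda$; and $\phi^{\mathrm{AI}}(K;0)<\lambda$ for all sufficiently large $K$ (these hold under the hypotheses $C(0)>\beta\Delta+u$, existence of such $\hat K$, $\lim_{K\to\infty}w^{\mathrm{AI}}(\underline\alpha,K;\pi)=\infty$, and continuity of $\phi^{\mathrm{AI}}(\cdot;0)$). Let $K_U^{\mathrm{AI}}>0$ be the smallest positive $K$ with $\phi^{\mathrm{AI}}(K;0)=\lambda$ (the unstable threshold steady state). Suppose $a_H^{\mathrm{AI}}(K)$ is continuous on $(0,\infty)$, strictly positive for all $K>0$, and that $a_H^{\mathrm{AI}}(K)/K$ is bounded below by a positive constant for all sufficiently small $K>0$. Then: (i) for every $\eta>0$, $\phi^{\mathrm{AI}}(K;\eta)>\phi^{\mathrm{AI}}(K;0)$ for all $K>0$; (ii) the number $$\bar\eta=\sup_{K\in(0,K_U^{\mathrm{AI}}]}\frac{[\lambda-\phi^{\mathrm{AI}}(K;0)]_+}{\Delta(1-\pi)\,a_H^{\mathrm{AI}}(K)/K}$$ satisfies $\bar\eta>0$ and, for all $\eta>\bar\eta$, $\phi^{\mathrm{AI}}(K;\eta)>\lambda$ for all $K\in(0,K_U^{\mathrm{AI}}]$ (the low-archive basin is eliminated); in particular if $\bar\eta\le1$ this is achieved by some $\eta\in[0,1]$,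 while if $\bar\eta>1$ then even $\eta=1$ does not achieve it; (iii) $\bar\eta$ is weakly decreasing under pointwise increases of $a_H^{\mathrm{AI}}(K)/K$ on $(0,K_U^{\mathrm{AI}}]$.
   Context: Model: archive stock $K\ge0$ depreciating at rate $\lambda\in(0,1)$; routine-task share $\pi\in(0,1)$; knowledge increment $\Delta>0$; parameters $\beta,u\ge0$; cost shifter $C(K)$; outside option $w^{\mathrm{AI}}(\alpha,K;\pi)$ with lowest ability $\underline\alpha$. In the AI environment, for each $K$ the period equilibrium gives a posted flow of knowledge-enhancing queries $q_H^{\mathrm{AI}}(K)\ge0$, resolution probability $\sigma^{\mathrm{AI}}(K)\in[0,1]$, and private-resolution probability of knowledge-enhancing queries $a_H^{\mathrm{AI}}(K)\in[0,1]$. With conversion rate $\eta\in[0,1]$ (probability that a privately resolved knowledge-enhancing query is publicly logged), knowledge creation is $h^{\mathrm{AI}}(K;\eta)=\Delta(1-\pi)[q_H^{\mathrm{AI}}(K)\sigma^{\mathrm{AI}}(K)+\eta a_H^{\mathrm{AI}}(K)]$ and average creation is $\phi^{\mathrm{AI}}(K;\eta)=h^{\mathrm{AI}}(K;\eta)/K$, so $\phi^{\mathrm{AI}}(K;\eta)=\phi^{\mathrm{AI}}(K;0)+\Delta(1-\pi)\eta\,a_H^{\mathrm{AI}}(K)/K$. $[x]_+=\max\{x,0\}$. *)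

From Stdlib Require Import Reals.
From Coquelicot Require Import Coquelicot.
Open Scope R_scope.

Definition phiAI (Delta pi : R) (qH sig aH : R -> R) (eta K : R) : R :=
  Delta * (1 - pi) * (qH K * sig K + eta * aH K) / K.

Definition posp (x : R) : R := Rmax x 0.

Definition etaratio (lam Delta pi : R) (qH sig aH : R -> R) (K : R) : R :=
  posp (lam - phiAI Delta pi qH sig aH 0 K) / (Delta * (1 - pi) * aH K / K).

Definition etabar (lam Delta pi : R) (qH sig aH : R -> R) (KU : R) : Rbar :=
  Lub_Rbar (fun y => exists K, 0 < K <= KU /\ y = etaratio lam Delta pi qH sig aH K).

(* Logging privately resolved queries adds the term [eta * s(K)] to the average creation rate,
   where [s(K) = Delta (1 - pi) aH(K) / K > 0]; this gives (i), and it makes [etaratio K <= e]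
   equivalent to [lam <= phi(K; e)] for [e >= 0].  Hence [etabar] is the least [eta] lifting
   [phi(.; eta)] to at least [lam] on all of (0, KU], which gives (ii) and, since a larger [s]
   lowers every ratio, (iii).  The supremum is finite because [s] is bounded below on (0, KU]:
   by hypothesis near 0, and by compactness on the rest of the interval; it is positive because
   [phi(K; 0) < lam] for small [K]. *)

From Stdlib Require Import Reals Lra.
From Coquelicot Require Import Coquelicot.
Open Scope R_scope.

Lemma continuous_pos_bounded_below (f : R -> R) (b c eps : R) :
  0 < b -> 0 < c -> 0 < eps ->
  (forall x, 0 < x <= b -> continuity_pt f x) ->
  (forall x, 0 < x <= b -> 0 < f x) ->
  (forall x, 0 < x < eps -> c <= f x) ->
  exists m, 0 < m /\ forall x, 0 < x <= b -> m <= f x.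
Proof.
  intros Hb Hc Heps Hcont Hpos Hnear.
  set (a := Rmin (eps / 2) b).
  assert (Ha : 0 < a <= b) by (split; [apply Rmin_glb_lt | apply Rmin_r]; lra).
  assert (Haeps : a < eps) by (pose proof (Rmin_l (eps / 2) b); unfold a; lra).
  destruct (continuity_ab_min f a b (proj2 Ha)) as [xm [Hmin Hxm]].
  { intros x Hx; apply Hcont; lra. }
  exists (Rmin c (f xm)); split.
  - apply Rmin_glb_lt; [exact Hc | apply Hpos; lra].
  - intros x Hx; destruct (Rlt_or_le x a) as [Hxa | Hax].
    + apply Rle_trans with c; [apply Rmin_l | apply Hnear; lra].
    + apply Rle_trans with (f xm); [apply Rmin_r | apply Hmin; lra].
Qed.

Lemma Lub_Rbar_image_finite (P : R -> Prop) (f : R -> R) (B : R) :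
  (exists x, P x) -> (forall x, P x -> f x <= B) ->
  exists l, Lub_Rbar (fun y => exists x, P x /\ y = f x) = Finite l /\
    (forall x, P x -> f x <= l) /\
    (forall e, (forall x, P x -> f x <= e) -> l <= e).
Proof.
  intros [x0 Hx0] HB.
  destruct (Lub_Rbar_correct (fun y => exists x, P x /\ y = f x)) as [Hub Hleast].
  assert (Hx0le := Hub (f x0) (ex_intro _ x0 (conj Hx0 eq_refl))).
  assert (HleB : Rbar_le (Lub_Rbar (fun y => exists x, P x /\ y = f x)) B)
    by (apply Hleast; intros y [x [Hx ->]]; apply HB, Hx).
  destruct (Lub_Rbar _) as [l | |]; try contradiction.
  exists l; repeat split.
  - intros x Hx; exact (Hub (f x) (ex_intro _ x (conj Hx eq_refl))).
  - intros e He; apply (Hleast (Finite e)); intros y [x [Hx ->]]; apply He, Hx.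
Qed.

Lemma Lub_Rbar_image_le (P : R -> Prop) (f g : R -> R) :
  (forall x, P x -> f x <= g x) ->
  Rbar_le (Lub_Rbar (fun y => exists x, P x /\ y = f x))
          (Lub_Rbar (fun y => exists x, P x /\ y = g x)).
Proof.
  intros Hfg; apply Lub_Rbar_correct; intros y [x [Hx ->]].
  apply Rbar_le_trans with (Finite (g x)); [exact (Hfg x Hx) |].
  apply Lub_Rbar_correct; exists x; auto.
Qed.

Lemma posp_div_le_iff (x g e : R) :
  0 < g -> 0 <= e -> (posp x / g <= e <-> x <= e * g).
Proof.
  intros Hg He; rewrite Rle_div_l by exact Hg; unfold posp.
  split; [intros H; apply Rle_trans with (Rmax x 0); [apply Rmax_l | exact H]
         | intros H; apply Rmax_lub; [exact H | apply Rmult_le_pos; lra]].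
Qed.

Definition phiAI_slope (Delta pi : R) (aH : R -> R) (K : R) : R :=
  Delta * (1 - pi) * aH K / K.

Lemma phiAI_affine (Delta pi : R) (qH sig aH : R -> R) (eta K : R) :
  phiAI Delta pi qH sig aH eta K =
  phiAI Delta pi qH sig aH 0 K + eta * phiAI_slope Delta pi aH K.
Proof. unfold phiAI, phiAI_slope, Rdiv; ring. Qed.

Lemma phiAI0_indep_aH (Delta pi : R) (qH sig aH aH' : R -> R) (K : R) :
  phiAI Delta pi qH sig aH 0 K = phiAI Delta pi qH sig aH' 0 K.
Proof. unfold phiAI, Rdiv; ring. Qed.

Section Threshold.

Variables (lam Delta pi : R) (qH sig aH : R -> R).
Hypotheses (Hlam : 0 <= lam) (HDelta : 0 < Delta) (Hpi : pi < 1)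
  (HqH : forall K, 0 < K -> 0 <= qH K) (Hsig : forall K, 0 < K -> 0 <= sig K).

Let phi := phiAI Delta pi qH sig aH.
Let slope := phiAI_slope Delta pi aH.
Let ratio := etaratio lam Delta pi qH sig aH.

Lemma phiAI_slope_pos (K : R) : 0 < K -> 0 < aH K -> 0 < slope K.
Proof.
  intros HK HaK; unfold slope, phiAI_slope, Rdiv.
  repeat apply Rmult_lt_0_compat; try apply Rinv_0_lt_compat; lra.
Qed.

Lemma phiAI0_nonneg (K : R) : 0 < K -> 0 <= phi 0 K.
Proof.
  intros HK; unfold phi, phiAI, Rdiv; rewrite Rmult_0_l, Rplus_0_r.
  apply Rmult_le_pos; [apply Rmult_le_pos | left; apply Rinv_0_lt_compat, HK].
  - apply Rmult_le_pos; lra.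
  - apply Rmult_le_pos; [apply HqH | apply Hsig]; exact HK.
Qed.

Lemma phiAI_lt_eta (eta eta' K : R) :
  0 < K -> 0 < aH K -> eta < eta' -> phi eta K < phi eta' K.
Proof.
  intros HK HaK Heta; unfold phi; rewrite (phiAI_affine _ _ _ _ _ eta K), (phiAI_affine _ _ _ _ _ eta' K).
  apply Rplus_lt_compat_l, Rmult_lt_compat_r; [apply phiAI_slope_pos |]; assumption.
Qed.

Lemma etaratio_le_iff (e K : R) :
  0 < K -> 0 < aH K -> 0 <= e -> (ratio K <= e <-> lam <= phi e K).
Proof.
  intros HK HaK He; unfold ratio, etaratio, phi; rewrite (phiAI_affine _ _ _ _ _ e K).
  fold (phiAI_slope Delta pi aH K).
  rewrite posp_div_le_iff by (try apply phiAI_slope_pos; assumption).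
  split; intros; lra.
Qed.

Lemma etaratio_pos (K : R) : 0 < K -> 0 < aH K -> phi 0 K < lam -> 0 < ratio K.
Proof.
  intros HK HaK Hlt; unfold ratio, etaratio, Rdiv; fold (phiAI_slope Delta pi aH K).
  apply Rmult_lt_0_compat; [| apply Rinv_0_lt_compat, phiAI_slope_pos; assumption].
  apply Rlt_le_trans with (lam - phi 0 K); [lra | apply Rmax_l].
Qed.

(* [phi(K; lam / s) >= (lam / s) * slope K >= lam]. *)
Lemma etaratio_le_of_slope_ge (s K : R) :
  0 < K -> 0 < aH K -> 0 < s -> s <= slope K -> ratio K <= lam / s.
Proof.
  intros HK HaK Hs HsK.
  apply etaratio_le_iff; try assumption; [apply Rdiv_le_0_compat; lra |].
  unfold phi; rewrite phiAI_affine.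
  assert (lam <= lam / s * slope K).
  { apply Rle_trans with (lam / s * s); [right; field; lra |].
    apply Rmult_le_compat_l; [apply Rdiv_le_0_compat|]; lra. }
  pose proof (phiAI0_nonneg K HK); unfold phi, slope in *; lra.
Qed.

Variable KU : R.
Hypotheses (HKU : 0 < KU) (HaHpos : forall K, 0 < K <= KU -> 0 < aH K).

Lemma phiAI_slope_bounded_below :
  (forall K, 0 < K -> continuous aH K) ->
  (exists c eps, 0 < c /\ 0 < eps /\ forall K, 0 < K < eps -> c <= aH K / K) ->
  exists s, 0 < s /\ forall K, 0 < K <= KU -> s <= slope K.
Proof.
  intros Hcont [c [eps [Hc [Heps Hnear]]]].
  destruct (continuous_pos_bounded_below (fun K => aH K / K) KU c eps)
    as [m [Hm Hbound]]; try assumption.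
  - intros K HK; change (continuity_pt (aH / id)%F K).
    apply continuity_pt_div; [apply continuity_pt_filterlim, Hcont | apply continuity_pt_id |];
      unfold id; lra.
  - intros K HK; apply Rdiv_lt_0_compat; [apply HaHpos |]; lra.
  - exists (Delta * (1 - pi) * m); split; [repeat apply Rmult_lt_0_compat; lra |].
    intros K HK; unfold slope, phiAI_slope, Rdiv; rewrite (Rmult_assoc (Delta * (1 - pi))).
    apply Rmult_le_compat_l; [apply Rmult_le_pos; lra | apply Hbound, HK].
Qed.

Lemma etabar_least_threshold (s : R) :
  0 < s -> (forall K, 0 < K <= KU -> s <= slope K) ->
  (exists eps, 0 < eps /\ forall K, 0 < K < eps -> phi 0 K < lam) ->
  exists eb, etabar lam Delta pi qH sig aH KU = Finite eb /\ 0 < eb /\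
    (forall K, 0 < K <= KU -> lam <= phi eb K) /\
    (forall e, 0 <= e -> (forall K, 0 < K <= KU -> lam <= phi e K) -> eb <= e).
Proof.
  intros Hs Hslope [eps [Heps Hsmall]].
  set (K1 := Rmin eps KU / 2).
  assert (HK1 : 0 < K1 <= KU /\ K1 < eps).
  { pose proof (Rmin_l eps KU); pose proof (Rmin_r eps KU).
    assert (0 < Rmin eps KU) by (apply Rmin_glb_lt; lra); unfold K1; lra. }
  destruct (Lub_Rbar_image_finite (fun K => 0 < K <= KU) ratio (lam / s))
    as [eb [Heb [Hub Hleast]]].
  - exists K1; apply HK1.
  - intros K HK; apply etaratio_le_of_slope_ge; auto; lra.
  - assert (Hpos : 0 < eb).
    { apply Rlt_le_trans with (ratio K1); [| apply Hub, HK1].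
      apply etaratio_pos; [| apply HaHpos | apply Hsmall]; lra. }
    exists eb; repeat split; try assumption.
    + intros K HK; apply etaratio_le_iff; [lra | apply HaHpos, HK | lra | apply Hub, HK].
    + intros e He Hlift; apply Hleast; intros K HK.
      apply etaratio_le_iff; [lra | apply HaHpos, HK | | apply Hlift]; assumption.
Qed.

Lemma etabar_antitone (aH' : R -> R) :
  (forall K, 0 < K <= KU -> aH K / K <= aH' K / K) ->
  Rbar_le (etabar lam Delta pi qH sig aH' KU) (etabar lam Delta pi qH sig aH KU).
Proof.
  intros Hle; apply Lub_Rbar_image_le; intros K HK.
  unfold etaratio; rewrite (phiAI0_indep_aH _ _ _ _ aH' aH).
  fold (phiAI_slope Delta pi aH K) (phiAI_slope Delta pi aH' K).
  assert (HsK : 0 < phiAI_slope Delta pi aH K) by (apply phiAI_slope_pos; [lra | apply HaHpos, HK]).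
  assert (phiAI_slope Delta pi aH K <= phiAI_slope Delta pi aH' K).
  { unfold phiAI_slope, Rdiv.
    rewrite (Rmult_assoc (Delta * (1 - pi)) (aH K)), (Rmult_assoc (Delta * (1 - pi)) (aH' K)).
    apply Rmult_le_compat_l; [apply Rmult_le_pos; lra | apply Hle, HK]. }
  unfold Rdiv; apply Rmult_le_compat_l; [apply Rmax_r |].
  apply Rinv_le_contravar; assumption.
Qed.

End Threshold.
Theorem proposition4
  (lam pi Delta : R) (qH sig aH : R -> R) (KU : R)
  (Hlam : 0 < lam < 1) (Hpi : 0 < pi < 1) (HDelta : 0 < Delta)
  (HqH : forall K, 0 < K -> 0 <= qH K)
  (Hsig : forall K, 0 < K -> 0 <= sig K <= 1)
  (HaH01 : forall K, 0 < K -> 0 <= aH K <= 1)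
  (* assumptions on phi^AI(.;0) *)
  (Hcont : forall K, 0 < K -> continuous (phiAI Delta pi qH sig aH 0) K)
  (Hsmall : exists eps, 0 < eps /\
              forall K, 0 < K < eps -> phiAI Delta pi qH sig aH 0 K < lam)
  (Hhat : exists Khat, 0 < Khat /\ lam < phiAI Delta pi qH sig aH 0 Khat)
  (Hlarge : exists M, forall K, M < K -> phiAI Delta pi qH sig aH 0 K < lam)
  (* KU is the smallest positive K with phi^AI(K;0) = lam *)
  (HKUpos : 0 < KU)
  (HKU : phiAI Delta pi qH sig aH 0 KU = lam)
  (HKUmin : forall K, 0 < K < KU -> phiAI Delta pi qH sig aH 0 K <> lam)
  (* assumptions on aH *)
  (HaHcont : forall K, 0 < K -> continuous aH K)
  (HaHpos : forall K, 0 < K -> 0 < aH K)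
  (HaHlow : exists c eps, 0 < c /\ 0 < eps /\
              forall K, 0 < K < eps -> c <= aH K / K) :
  (* (i) *)
  (forall eta, 0 < eta -> forall K, 0 < K ->
     phiAI Delta pi qH sig aH 0 K < phiAI Delta pi qH sig aH eta K)
  /\
  (* (ii) *)
  (exists eb : R,
     etabar lam Delta pi qH sig aH KU = Finite eb /\
     0 < eb /\
     (forall eta, eb < eta -> forall K, 0 < K <= KU ->
        lam < phiAI Delta pi qH sig aH eta K) /\
     (eb < 1 -> exists eta, 0 <= eta <= 1 /\
        forall K, 0 < K <= KU -> lam < phiAI Delta pi qH sig aH eta K) /\
     (1 < eb -> ~ (forall K, 0 < K <= KU -> lam < phiAI Delta pi qH sig aH 1 K)))
  /\
  (* (iii) *)
  (forall aH' : R -> R,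
     (forall K, 0 < K <= KU -> aH K / K <= aH' K / K) ->
     Rbar_le (etabar lam Delta pi qH sig aH' KU) (etabar lam Delta pi qH sig aH KU)).
Proof.
  assert (Hsig0 : forall K, 0 < K -> 0 <= sig K) by (intros K HK; apply Hsig, HK).
  assert (HaHKU : forall K, 0 < K <= KU -> 0 < aH K) by (intros K HK; apply HaHpos, HK).
  assert (Hlam0 : 0 <= lam) by lra.
  assert (Hpi1 : pi < 1) by lra.
  destruct (phiAI_slope_bounded_below Delta pi aH HDelta Hpi1 KU HKUpos HaHKU HaHcont HaHlow)
    as [s [Hs Hslope]].
  destruct (etabar_least_threshold lam Delta pi qH sig aH Hlam0 HDelta Hpi1 HqH Hsig0
              KU HKUpos HaHKU s Hs Hslope Hsmall) as [eb [Heb [Heb0 [Hreach Hleast]]]].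
  assert (Hbeyond : forall eta, eb < eta -> forall K, 0 < K <= KU ->
            lam < phiAI Delta pi qH sig aH eta K).
  { intros eta Heta K HK; apply Rle_lt_trans with (phiAI Delta pi qH sig aH eb K);
      [apply Hreach, HK | apply phiAI_lt_eta; try apply HaHKU; tauto]. }
  split; [| split].
  - intros eta Heta K HK; apply phiAI_lt_eta; auto.
  - exists eb; repeat split; try assumption.
    + intros Hlt; exists 1; split; [lra | apply Hbeyond, Hlt].
    + intros Hgt Hall.
      assert (eb <= 1) by (apply Hleast; [lra | intros K HK; left; apply Hall, HK]).
      lra.
  - intros aH' Hle; apply etabar_antitone; assumption.
Qed.
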